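(* For any time warp $f$, any $n\in\omega\setminus\{0\}$ and any $m\in\omega$: (i) $f^\star(n)=m$ iff $f(m)<n\le f(m+1)$; (ii) $f^\star(\omega)=m$ iff $f(m)<\omega=f(m+1)$; (iii) $f^\star(n)=\omega$ iff $f(\omega)<n$; (iv) $f^\star(\omega)=\omega$ iff $f(\omega)<\omega$ or $\mathrm{last}(f)=\omega$.
   Context: Let $\omega^+=\omega\cup\{\omega\}$. A time warp is a join-preserving map $f\colon\omega^+\to\omega^+$ (equivalently order-preserving with $f(0)=0$, $f(\omega)=\bigvee_{n\in\omega}f(n)$), with time warps ordered pointwise. $p(m)=\bigvee\{k\in\omega\mid k<m\}$ is the predecessor time warp, and $f^\star$ is the largest time warp $h$ with $f\circ h\le p$. For a time warp $f$, $\mathrm{last}(f)=\min\{m\in\omega^+\mid f(m)=f(\omega)\}$. *)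

From Stdlib Require Import Arith Lia.

Inductive omp : Type := Fin (n : nat) | Om.

Definition ole (x y : omp) : Prop :=
  match x, y with
  | Fin m, Fin n => m <= n
  | _, Om => True
  | Om, Fin _ => False
  end.

Definition olt (x y : omp) : Prop := ole x y /\ x <> y.

Definition is_join_seq (s : nat -> omp) (x : omp) : Prop :=
  (forall n, ole (s n) x) /\ (forall u, (forall n, ole (s n) u) -> ole x u).

Definition time_warp (f : omp -> omp) : Prop :=
  (forall x y, ole x y -> ole (f x) (f y)) /\
  f (Fin 0) = Fin 0 /\
  is_join_seq (fun n => f (Fin n)) (f Om).

Definition pred_tw (x : omp) : omp :=
  match x with
  | Fin 0 => Fin 0
  | Fin (S n) => Fin n
  | Om => Om
  end.

Definition is_star (f h : omp -> omp) : Prop :=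
  time_warp h /\
  (forall x, ole (f (h x)) (pred_tw x)) /\
  (forall g, time_warp g -> (forall x, ole (f (g x)) (pred_tw x)) ->
     forall x, ole (g x) (h x)).

Definition is_last (f : omp -> omp) (l : omp) : Prop :=
  f l = f Om /\ (forall m, f m = f Om -> ole l m).

Lemma pred_tw_join (x : omp) :
  (forall k, olt (Fin k) x -> ole (Fin k) (pred_tw x)) /\
  (forall u, (forall k, olt (Fin k) x -> ole (Fin k) u) -> ole (pred_tw x) u).
Proof.
  destruct x as [[|n]|]; simpl; split.
  - intros k [H1 H2]. simpl in H1. assert (k = 0) by lia. subst; simpl; lia.
  - intros u _; destruct u; simpl; auto; lia.
  - intros k [H1 H2]. simpl in *. assert (k <> S n) by congruence. lia.
  - intros u H. apply (H n). split; simpl; [lia|intro E; injection E; lia].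
  - intros k _; exact I.
  - intros u H. destruct u as [n|]; simpl; auto.
    specialize (H (S n)). simpl in H. assert (S n <= n); [apply H; split; [exact I|discriminate]|lia].
Qed.

(* For n > 0 the star is characterised by a Galois condition:
   y <= f*(n) iff f(y) < n.  One direction is f(f*(n)) <= p(n); for the other,
   the step time warp that is 0 below n and y from n on lies below p after
   composing with f, so by maximality it lies below f*.  Since f*(omega) is the
   join of the f*(n), it follows that m <= f*(omega) iff f(m) is finite.
   An element of omega^+ is determined by the finite numbers below it, so all
   four items can be read off from these two characterisations. *)

From Stdlib Require Import Arith Lia.

Lemma ole_refl x : ole x x.
Proof. destruct x; simpl; auto. Qed.

Lemma ole_trans x y z : ole x y -> ole y z -> ole x z.
Proof. destruct x, y, z; simpl; intuition lia. Qed.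

Lemma ole_Om x : ole x Om.
Proof. destruct x; exact I. Qed.

Lemma Om_le x : ole Om x <-> x = Om.
Proof. destruct x; simpl; intuition discriminate. Qed.

Lemma olt_Om y : olt y Om <-> y <> Om.
Proof. unfold olt; split; [tauto|split; [apply ole_Om|assumption]]. Qed.

Lemma olt_Fin_S y n : olt y (Fin (S n)) <-> ole y (Fin n).
Proof.
  unfold olt; destruct y as [k|]; simpl; split; try tauto.
  - intros [Hle Hne]; assert (k <> S n) by congruence; lia.
  - intro Hle; split; [lia|intro E; injection E; lia].
Qed.

Lemma not_ole_Fin y n : ~ ole y (Fin n) <-> ole (Fin (S n)) y.
Proof. destruct y; simpl; lia. Qed.

Lemma ole_Fin_iff_not x n : ole x (Fin n) <-> ~ ole (Fin (S n)) x.
Proof. destruct x; simpl; lia. Qed.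

Lemma eq_Fin_iff x m : x = Fin m <-> ole (Fin m) x /\ ~ ole (Fin (S m)) x.
Proof.
  destruct x as [k|]; simpl; split.
  - intro E; injection E; lia.
  - intros [H1 H2]; f_equal; lia.
  - discriminate.
  - tauto.
Qed.

Lemma eq_Om_iff x : x = Om <-> forall m, ole (Fin m) x.
Proof.
  destruct x as [k|]; simpl; split; try discriminate; auto.
  intro H; specialize (H (S k)); lia.
Qed.

Lemma monotone_Fin_ne_Om_iff (f : omp -> omp) :
  (forall x y, ole x y -> ole (f x) (f y)) ->
  (forall m, f (Fin m) <> Om) <-> olt (f Om) Om \/ is_last f Om.
Proof.
  intro Hmono; split.
  - intro Hfin; destruct (f Om) eqn:E.
    + left; apply olt_Om; discriminate.
    + right; split; [reflexivity|].
      intros [m|] Em; [exact (Hfin m (eq_trans Em E))|exact I].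
  - intros Hcase m Em.
    assert (EOm : f Om = Om).
    { apply Om_le, (ole_trans _ (f (Fin m))); [rewrite Em; exact I|].
      apply Hmono, ole_Om. }
    destruct Hcase as [Hlt|[_ Hleast]].
    + exact (proj1 (olt_Om _) Hlt EOm).
    + apply (Hleast (Fin m)); congruence.
Qed.

Definition step_warp (n : nat) (y x : omp) : omp :=
  match x with
  | Fin k => if k <=? n then Fin 0 else y
  | Om => y
  end.

Lemma step_warp_jump n y : step_warp n y (Fin (S n)) = y.
Proof. unfold step_warp; now rewrite (proj2 (Nat.leb_gt (S n) n)) by lia. Qed.

Lemma step_warp_time_warp n y : time_warp (step_warp n y).
Proof.
  assert (Hy : ole (Fin 0) y) by (destruct y; simpl; lia).
  split; [|split; [reflexivity|split]].
  - intros [a|] [b|]; simpl; try contradiction; intro Hab;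
      try destruct (Nat.leb_spec a n); try destruct (Nat.leb_spec b n);
      simpl; auto using ole_refl; lia.
  - intro k; simpl; destruct (Nat.leb_spec k n); auto using ole_refl.
  - intros u Hu; specialize (Hu (S n)); now rewrite step_warp_jump in Hu.
Qed.

Lemma step_warp_below_pred (f : omp -> omp) n y :
  f (Fin 0) = Fin 0 -> ole (f y) (Fin n) ->
  forall x, ole (f (step_warp n y x)) (pred_tw x).
Proof.
  intros f0 Hy [k|]; [unfold step_warp|apply ole_Om].
  destruct (Nat.leb_spec k n), k as [|k]; try lia.
  - rewrite f0; simpl; lia.
  - rewrite f0; simpl; lia.
  - apply (ole_trans _ _ _ Hy); simpl; lia.
Qed.

Section Star.

Variables f h : omp -> omp.
Hypothesis Hf : time_warp f.
Hypothesis Hh : is_star f h.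

Lemma le_star_Fin_S y n : ole y (h (Fin (S n))) <-> ole (f y) (Fin n).
Proof.
  destruct Hf as [fmono [f0 _]], Hh as [_ [hbelow hmax]]; split.
  - intro Hy; apply (ole_trans _ (f (h (Fin (S n))))); [now apply fmono|].
    exact (hbelow (Fin (S n))).
  - intro Hy.
    pose proof (hmax _ (step_warp_time_warp n y)
                  (step_warp_below_pred f n y f0 Hy) (Fin (S n))) as Hstep.
    now rewrite step_warp_jump in Hstep.
Qed.

Lemma Fin_le_star_Om m : ole (Fin m) (h Om) <-> f (Fin m) <> Om.
Proof.
  destruct Hf as [_ [f0 _]], Hh as [[_ [h0 [hupper hleast]]] _]; split.
  - intros Hm Em.
    destruct m as [|m]; [congruence|].
    enough (Hbound : ole (h Om) (Fin m))
      by (pose proof (ole_trans _ _ _ Hm Hbound); simpl in *; lia).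
    apply hleast; intros [|k]; [rewrite h0; simpl; lia|].
    apply (proj2 (ole_Fin_iff_not _ _)).
    rewrite le_star_Fin_S, Em; simpl; tauto.
  - intro Hfin; destruct (f (Fin m)) as [j|] eqn:Ej; [|congruence].
    apply (ole_trans _ (h (Fin (S j)))); [|apply hupper].
    apply le_star_Fin_S; rewrite Ej; simpl; lia.
Qed.

End Star.

Theorem proposition2p7 (f h : omp -> omp) :
  time_warp f -> is_star f h ->
  (forall n m : nat, 0 < n ->
     (h (Fin n) = Fin m <-> olt (f (Fin m)) (Fin n) /\ ole (Fin n) (f (Fin (S m))))) /\
  (forall m : nat,
     (h Om = Fin m <-> olt (f (Fin m)) Om /\ f (Fin (S m)) = Om)) /\
  (forall n : nat, 0 < n ->
     (h (Fin n) = Om <-> olt (f Om) (Fin n))) /\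
  (h Om = Om <-> olt (f Om) Om \/ is_last f Om).
Proof.
  intros Hf Hh; split; [|split; [|split]].
  - intros [|n] m Hn; [lia|].
    rewrite eq_Fin_iff, !(le_star_Fin_S f h Hf Hh), olt_Fin_S, not_ole_Fin.
    reflexivity.
  - intro m.
    rewrite eq_Fin_iff, !(Fin_le_star_Om f h Hf Hh), olt_Om.
    destruct (f (Fin (S m))); intuition congruence.
  - intros [|n] Hn; [lia|].
    rewrite <- Om_le, (le_star_Fin_S f h Hf Hh), olt_Fin_S; reflexivity.
  - rewrite eq_Om_iff, <- (monotone_Fin_ne_Om_iff f (proj1 Hf)).
    split; intros H m; specialize (H m); now rewrite (Fin_le_star_Om f h Hf Hh) in *.
Qed.
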